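(* For $p\in(0,1)$ and $y\in(0,1)$ let $$I(y)=\log(y)\log\!\left(\frac{\log p}{\log y}\right)+\log\!\left(\frac yp\right),\qquad \mathcal{I}(y)=y\log\!\left(\frac yp\right)+(1-y)\log\!\left(\frac{1-y}{1-p}\right).$$ Then for all $p,y\in(0,1)$, $I(y)\ge\mathcal{I}(y)$, with equality if and only if $y=p$.
   Context: $\mathcal{I}$ is the Cramér rate function of the empirical mean of i.i.d. Bernoulli($p$) variables; $I$ is the rate function of the Adaptive Multilevel Splitting estimator. *)

From Stdlib Require Import Reals.
Open Scope R_scope.

Definition I_ams (p y : R) : R :=
  ln y * ln (ln p / ln y) + ln (y / p).

Definition I_cramer (p y : R) : R :=
  y * ln (y / p) + (1 - y) * ln ((1 - y) / (1 - p)).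

(** Fix y and view the gap G(q) = I(y) - 𝓘(y) as a function of the parameter q = p.
    It vanishes at q = y, and its derivative factors as
    G'(q) = (1 - y) / (q ln q) * (ln y / (1 - y) - ln q / (1 - q)).
    The first factor is negative and s ↦ ln s / (1 - s) is strictly increasing on (0,1)
    (its derivative has the sign of 1/s - 1 + ln s > 0), so G' has the sign of q - y:
    G decreases then increases, and q = y is its strict global minimum on (0,1). *)

From Stdlib Require Import Reals Lra.
From Coquelicot Require Import Coquelicot.
Open Scope R_scope.

Lemma ln_lt_0 (x : R) : 0 < x < 1 -> ln x < 0.
Proof. intros Hx; rewrite <- ln_1; apply ln_increasing; lra. Qed.

Lemma one_sub_ln_lt_inv (x : R) : 0 < x -> x <> 1 -> 1 - ln x < / x.
Proof.
  intros Hx Hx1.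
  assert (Hlninv : ln (/ x) <> 0).
  { rewrite ln_Rinv by lra; intro Hln.
    apply Hx1, ln_inv; [lra | lra | rewrite ln_1; lra]. }
  pose proof (exp_ineq1 _ Hlninv) as Hexp.
  rewrite exp_ln, ln_Rinv in Hexp by (try apply Rinv_0_lt_compat; lra).
  lra.
Qed.

Lemma strict_min_of_derivative_sign (f f' : R -> R) (a b y x : R) :
  (forall c, a < c < b -> derivable_pt_lim f c (f' c)) ->
  (forall c, a < c < b -> c <> y -> 0 < f' c * (c - y)) ->
  a < y < b -> a < x < b -> x <> y -> f y < f x.
Proof.
  intros Hder Hsign Hy Hx Hxy.
  destruct (Rlt_or_le x y) as [Hlt | Hle].
  - destruct (MVT_cor2 f f' x y Hlt) as [c [Hmvt Hc]].
    { intros c Hc; apply Hder; lra. }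
    pose proof (Hsign c ltac:(lra) ltac:(lra)); nra.
  - destruct (MVT_cor2 f f' y x ltac:(lra)) as [c [Hmvt Hc]].
    { intros c Hc; apply Hder; lra. }
    pose proof (Hsign c ltac:(lra) ltac:(lra)); nra.
Qed.

Lemma ln_div_one_sub_increasing (s t : R) :
  0 < s -> s < t -> t < 1 -> ln s / (1 - s) < ln t / (1 - t).
Proof.
  intros Hs Hst Ht.
  destruct (MVT_cor2 (fun x => ln x / (1 - x))
     (fun x => (/ x - 1 + ln x) / ((1 - x) * (1 - x))) s t Hst) as [c [Hmvt Hc]].
  { intros c Hc; apply is_derive_Reals; auto_derive.
    - repeat split; lra.
    - field; lra. }
  pose proof (one_sub_ln_lt_inv c ltac:(lra) ltac:(lra)).
  assert (Hder : 0 < (/ c - 1 + ln c) / ((1 - c) * (1 - c)))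
    by (apply Rdiv_lt_0_compat; nra).
  nra.
Qed.

Definition ams_cramer_gap (y q : R) : R := I_ams q y - I_cramer q y.

Definition ams_cramer_gap' (y q : R) : R :=
  ln y / (q * ln q) - (1 - y) / (q * (1 - q)).

Lemma ams_cramer_gap_derivative (y q : R) : 0 < y < 1 -> 0 < q < 1 ->
  derivable_pt_lim (ams_cramer_gap y) q (ams_cramer_gap' y q).
Proof.
  intros Hy Hq.
  pose proof (ln_lt_0 y Hy); pose proof (ln_lt_0 q Hq).
  apply is_derive_Reals; unfold ams_cramer_gap, ams_cramer_gap', I_ams, I_cramer.
  auto_derive.
  - assert (/ ln y < 0) by (apply Rinv_lt_0_compat; lra).
    assert (0 < / q) by (apply Rinv_0_lt_compat; lra).
    assert (0 < / (1 + - q)) by (apply Rinv_0_lt_compat; lra).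
    repeat split; lra || nra.
  - field; repeat split; lra.
Qed.

Lemma ams_cramer_gap_diag (y : R) : 0 < y < 1 -> ams_cramer_gap y y = 0.
Proof.
  intros Hy; pose proof (ln_lt_0 y Hy).
  unfold ams_cramer_gap, I_ams, I_cramer.
  rewrite !Rdiv_diag by lra; rewrite ln_1; ring.
Qed.

Lemma ams_cramer_gap'_sign (y q : R) : 0 < y < 1 -> 0 < q < 1 -> q <> y ->
  0 < ams_cramer_gap' y q * (q - y).
Proof.
  intros Hy Hq Hqy.
  pose proof (ln_lt_0 q Hq).
  assert (Hfactor : ams_cramer_gap' y q
    = (1 - y) / (q * ln q) * (ln y / (1 - y) - ln q / (1 - q)))
    by (unfold ams_cramer_gap'; field; repeat split; lra).
  assert (Hneg : (1 - y) / (q * ln q) < 0) by (apply Rdiv_pos_neg; nra).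
  assert (Hopposite : (ln y / (1 - y) - ln q / (1 - q)) * (q - y) < 0).
  { destruct (Rlt_or_le q y) as [Hlt | Hle].
    - pose proof (ln_div_one_sub_increasing q y ltac:(lra) Hlt ltac:(lra)); nra.
    - pose proof (ln_div_one_sub_increasing y q ltac:(lra) ltac:(lra) ltac:(lra)); nra. }
  rewrite Hfactor, Rmult_assoc; nra.
Qed.

Theorem proposition6p1 (p y : R) (hp : 0 < p < 1) (hy : 0 < y < 1) :
  I_cramer p y <= I_ams p y /\ (I_ams p y = I_cramer p y <-> y = p).
Proof.
  pose proof (ams_cramer_gap_diag y hy) as Hdiag.
  destruct (Req_dec p y) as [-> | Hpy].
  - unfold ams_cramer_gap in Hdiag; lra.
  - assert (Hgap : ams_cramer_gap y y < ams_cramer_gap y p).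
    { apply (strict_min_of_derivative_sign _ (ams_cramer_gap' y) 0 1);
        auto using ams_cramer_gap_derivative, ams_cramer_gap'_sign. }
    unfold ams_cramer_gap in Hdiag, Hgap.
    split; [lra | split; intro; [lra | congruence]].
Qed.
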